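(* Let $n\ge 1$ and $d\ge 2$ be integers. Consider the $(n,d)$ random access code task: Alice receives a string $x=x_1x_2\cdots x_n$ with each $x_i\in\{1,\dots,d\}$, drawn uniformly from all $d^n$ strings; Bob receives $y\in\{1,\dots,n\}$ uniformly at random and outputs $z\in\{1,\dots,d\}$. A classical protocol consists of an encoding, i.e. conditional probability distributions $p_e(m|x)$ over messages $m$ from a finite set of arbitrary size, and a decoding, i.e. conditional probability distributions $p_d(z|y,m)$; it yields $p(z|x,y)=\sum_m p_e(m|x)p_d(z|y,m)$. Its success metric is $$\mathcal{S}_C(n,d)=\frac{1}{n d^n}\sum_{x,y} p(z=x_y\,|\,x,y),$$ and its distinguishability is $$\mathcal{D}_C=\frac{1}{d^n}\sum_m \max_x p_e(m|x).$$ Then every classical protocol satisfies $$n\,\mathcal{S}_C(n,d)+1-n\le \mathcal{D}_C.$$ *)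

From mathcomp Require Import all_boot all_order all_algebra.
Set Implicit Arguments. Unset Strict Implicit. Unset Printing Implicit Defensive.
Import Order.TTheory GRing.Theory Num.Theory.
Local Open Scope ring_scope.

(* Alice's input strings x = x_1...x_n with x_i in {1..d}, encoded as
   finite functions 'I_n -> 'I_d (symbols 0..d-1). *)
Definition string (n d : nat) := {ffun 'I_n -> 'I_d}.

Definition cond_distr (R : numDomainType) (A B : finType) (f : A -> B -> R) : Prop :=
  (forall a b, 0 <= f a b) /\ (forall a, \sum_(b : B) f a b = 1).

Definition prot_prob (R : numDomainType) (n d : nat) (M : finType)
  (pe : string n d -> M -> R) (pd : 'I_n * M -> 'I_d -> R)
  (x : string n d) (y : 'I_n) (z : 'I_d) : R :=
  \sum_(m : M) pe x m * pd (y, m) z.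

Definition success (R : numFieldType) (n d : nat) (M : finType)
  (pe : string n d -> M -> R) (pd : 'I_n * M -> 'I_d -> R) : R :=
  (n * d ^ n)%:R^-1 * \sum_(x : string n d) \sum_(y : 'I_n) prot_prob pe pd x y (x y).

(* D_C = 1/d^n sum_m max_x pe(m|x)  (max of nonnegative reals, seeded with 0) *)
Definition distinguishability (R : numFieldType) (n d : nat) (M : finType)
  (pe : string n d -> M -> R) : R :=
  (d ^ n)%:R^-1 * \sum_(m : M) \big[Num.max/0]_(x : string n d) pe x m.

From mathcomp Require Import all_boot all_order all_algebra.
From mathcomp Require Import ring lra.
Import Order.TTheory GRing.Theory Num.Theory.
Set Implicit Arguments. Unset Strict Implicit. Unset Printing Implicit Defensive.
Local Open Scope ring_scope.

(* Fix a message m. The probability prod_y pd(x_y|y,m) that Bob decodes every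
   symbol of x correctly is at least 1 - sum_y (1 - pd(x_y|y,m)) (Weierstrass
   product inequality), and these probabilities sum to 1 over x. Bounding
   pe(m|x) by max_x pe(m|x) therefore bounds the contribution of m to
   n S_C + 1 - n (after normalisation by d^n) by its contribution to D_C. *)

Lemma one_sub_sum_le_prod (R : realDomainType) (I : Type) (s : seq I) (a : I -> R) :
  (forall i, 0 <= a i <= 1) -> 1 - \sum_(i <- s) (1 - a i) <= \prod_(i <- s) a i.
Proof.
move=> a01; elim: s => [|i s IHs]; first by rewrite !big_nil subr0.
have /andP[ai0 ai1] := a01 i.
have prod_le1 : \prod_(j <- s) a j <= 1 by exact: prodr_ile1.
rewrite !big_cons; nra.
Qed.

Lemma le_bigmax0 (R : realDomainType) (T : finType) (f : T -> R) (x : T) :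
  f x <= \big[Num.max/0]_(y : T) f y.
Proof. by rewrite (bigD1 x) //= le_max lexx. Qed.

Lemma cond_distr_le1 (R : numDomainType) (A B : finType) (f : A -> B -> R) a b :
  cond_distr f -> f a b <= 1.
Proof.
move=> [f0 f1]; rewrite -(f1 a) (bigD1 b) //= lerDl.
by apply: sumr_ge0 => *; apply: f0.
Qed.

Lemma sum_ffun_prod_eq1 (R : numDomainType) (I J : finType) (f : I -> J -> R) :
  (forall i, \sum_j f i j = 1) -> \sum_(g : {ffun I -> J}) \prod_i f i (g i) = 1.
Proof. by move=> f1; rewrite -bigA_distr_bigA big1. Qed.

Lemma sum_union_bound_le_bigmax (R : realDomainType) (I J : finType)
    (w : {ffun I -> J} -> R) (q : I -> J -> R) :
  (forall x, 0 <= w x) -> cond_distr q ->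
  \sum_x w x * (1 - \sum_i (1 - q i (x i))) <= \big[Num.max/0]_x w x.
Proof.
move=> w0 q_distr; have [q0 q1] := q_distr.
have q01 i j : 0 <= q i j <= 1 by rewrite q0 cond_distr_le1.
set W := \big[Num.max/0]_x w x.
have -> : W = \sum_(x : {ffun I -> J}) W * \prod_i q i (x i).
  by rewrite -mulr_sumr sum_ffun_prod_eq1 ?mulr1.
apply: ler_sum => x _.
have union_bound : 1 - \sum_i (1 - q i (x i)) <= \prod_i q i (x i).
  by apply: one_sub_sum_le_prod => i; exact: q01.
apply: le_trans (ler_wpM2l (w0 x) union_bound) _.
apply: ler_wpM2r; last exact: le_bigmax0.
by apply: prodr_ge0 => i _; exact: q0.
Qed.

Lemma success_affine_eq (R : realFieldType) (n d : nat) (M : finType)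
    (pe : string n d -> M -> R) (pd : 'I_n * M -> 'I_d -> R) :
  (0 < n)%N -> (0 < d)%N -> cond_distr pe ->
  n%:R * success pe pd + 1 - n%:R = (d ^ n)%:R^-1 *
    \sum_m \sum_(x : string n d) pe x m * (1 - \sum_y (1 - pd (y, m) (x y))).
Proof.
move=> n_gt0 d_gt0 [_ pe1].
have n0 : n%:R != 0 :> R by rewrite pnatr_eq0 -lt0n.
have dn0 : (d ^ n)%:R != 0 :> R by rewrite pnatr_eq0 -lt0n expn_gt0 d_gt0.
have mass : \sum_(x : string n d) \sum_m pe x m = (d ^ n)%:R.
  by rewrite (eq_bigr _ (fun x _ => pe1 x)) sumr_const card_ffun !card_ord.
have split_term x m : pe x m * (1 - \sum_y (1 - pd (y, m) (x y))) =
    \sum_y pe x m * pd (y, m) (x y) + pe x m * (1 - n%:R).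
  by rewrite sumrB sumr_const card_ord -mulr_sumr; ring.
have sum_eq : \sum_m \sum_(x : string n d) pe x m * (1 - \sum_y (1 - pd (y, m) (x y)))
    = \sum_(x : string n d) \sum_y prot_prob pe pd x y (x y) + (d ^ n)%:R * (1 - n%:R).
  rewrite exchange_big /= -mass big_distrl -big_split /=.
  apply: eq_bigr => x _; rewrite big_distrl /=.
  under eq_bigr do rewrite split_term.
  by rewrite big_split /= exchange_big.
rewrite sum_eq /success natrM invfM.
field; by rewrite dn0 n0.
Qed.

Theorem theorem1 (R : realFieldType) (n d : nat) (M : finType)
  (pe : string n d -> M -> R) (pd : 'I_n * M -> 'I_d -> R) :
  (1 <= n)%N -> (2 <= d)%N ->
  cond_distr pe -> cond_distr pd ->
  n%:R * success pe pd + 1 - n%:R <= distinguishability pe.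
Proof.
move=> n_gt0 d_ge2 pe_distr [pd0 pd1].
rewrite success_affine_eq ?(leq_trans _ d_ge2) //.
rewrite /distinguishability; apply: ler_wpM2l; first by rewrite invr_ge0 ler0n.
apply: ler_sum => m _.
have pdm_distr : cond_distr (fun y z => pd (y, m) z).
  by split=> [y z | y]; [apply: pd0 | apply: pd1].
exact (sum_union_bound_le_bigmax (fun x => pe_distr.1 x m) pdm_distr).
Qed.
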